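(* Every von Neumann regular commutative ring $\mathbf A$ is an amalgamation base for $\mathsf{RCR}$: for all $\mathbf B,\mathbf C\in\mathsf{RCR}$ and ring embeddings $h_1:\mathbf A\to\mathbf B$, $h_2:\mathbf A\to\mathbf C$, there exist $\mathbf D\in\mathsf{RCR}$ and ring embeddings $g_1:\mathbf B\to\mathbf D$, $g_2:\mathbf C\to\mathbf D$ with $g_1\circ h_1=g_2\circ h_2$.
   Context: Rings are unital. $\mathsf{RCR}$ is the class of reduced commutative rings (no nonzero nilpotents). A commutative ring $\mathbf A$ is (von Neumann) regular if for every $a\in A$ there is $b\in A$ with $a=a^2b$. *)

From HB Require Import structures.
From mathcomp Require Import all_boot all_algebra.
Set Implicit Arguments. Unset Strict Implicit. Unset Printing Implicit Defensive.
Import GRing.Theory.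
Local Open Scope ring_scope.

Definition reduced (R : comPzRingType) : Prop :=
  forall (x : R) (n : nat), x ^+ n = 0 -> x = 0.

Definition vn_regular (R : comPzRingType) : Prop :=
  forall a : R, exists b : R, a = a ^+ 2 * b.

From HB Require Import structures.
From mathcomp Require Import all_boot all_algebra.
From mathcomp Require Import boolp classical_sets ring.
Set Implicit Arguments. Unset Strict Implicit. Unset Printing Implicit Defensive.
Import GRing.Theory.
Local Open Scope ring_scope.
Local Open Scope classical_set_scope.

(* The amalgam is the reduction [D] of (a quotient of) [B (x)_A C]. Since [B] is reduced,
   [B -> D] is injective once [B -> B (x)_A C] is: an element of [B] whose image is
   nilpotent is itself nilpotent. For [b <> 0], Zorn gives an ideal [m] of [A] maximal
   with [b \notin mB]; idempotents of the regular ring [A] make [A/m] a field and give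
   [mC \cap A = m], so [1 \notin mC], and a second Zorn argument on graphs yields an
   [A]-linear [phi : C -> A/m] with [phi 1 = 1]. Then [b' (x) c |-> b' phi(c) mod mB]
   separates [b (x) 1] from [0]. Rather than the tensor product itself we use formal sums
   of pairs modulo everything such balanced maps (into [B] and into [C]) cannot separate. *)

Lemma Zorn_above (T : Type) (P : set (set T)) (X0 : set T) :
  P X0 ->
  (forall F : set (set T), F `<=` P -> total_on F subset -> F !=set0 ->
     P (\bigcup_(X in F) X)) ->
  exists M, [/\ P M, X0 `<=` M & forall X, P X -> M `<=` X -> X `<=` M].
Proof.
move=> PX0 Pchain.
have [|Y [PY Ymax]] := @Zorn_bigcup T [set Y | P (X0 `|` Y)].
  move=> F FP Ftot /=; have [->|/set0P [Y FY]] := eqVneq F set0.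
    by rewrite /= bigcup_set0 setU0.
  have -> : X0 `|` \bigcup_(X in F) X = \bigcup_(X in (setU X0) @` F) X.
    rewrite eqEsubset; split=> [t [X0t|[X FX Xt]]|t [_ [X FX <-] Xt]].
    - by exists (X0 `|` Y); [exists Y|left].
    - by exists (X0 `|` X); [exists X|right].
    - by case: Xt => [|Xt]; [left|right; exists X].
  apply: Pchain.
  - by move=> _ [X FX <-]; exact: FP.
  - move=> _ _ [X FX <-] [Z FZ <-].
    by case: (Ftot _ _ FX FZ) => XZ; [left|right]; apply: setUS.
  - by exists (X0 `|` Y), Y.
exists (X0 `|` Y); split=> [//||X PX YX]; first exact: subsetUl.
have X0X : X0 `<=` X by move=> t X0t; apply: YX; left.
apply: contrapT => XnY; apply: (Ymax X); last by rewrite /= (setUidPr _ _).2.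
by split=> [t Yt|XY]; [apply: YX; right|apply: XnY => t /XY; right].
Qed.

Lemma chain_bigcup_seq (T : eqType) (F : set (set T)) (s : seq T) :
  total_on F subset -> F !=set0 ->
  (forall t, t \in s -> (\bigcup_(X in F) X) t) ->
  exists2 X, F X & forall t, t \in s -> X t.
Proof.
move=> Ftot [X0 FX0]; elim: s => [|t s IH] sF; first by exists X0.
have [X FX Xs] := IH (fun u us => sF u (mem_behead (s := t :: s) us)).
have [Y FY Yt] := sF t (mem_head t s).
have [XY|YX] := Ftot _ _ FX FY.
- by exists Y => // u; rewrite inE => /predU1P [->|/Xs /XY].
- by exists X => // u; rewrite inE => /predU1P [->|/Xs //]; exact: YX.
Qed.

Record ideal (R : comPzRingType) (I : set R) : Prop := Ideal {
  ideal0 : I 0;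
  idealB : forall x y, I x -> I y -> I (x - y);
  idealMl : forall a x, I x -> I (a * x) }.

Section IdealTheory.
Variables (R : comPzRingType) (I : set R).
Hypothesis idI : ideal I.

Lemma idealN x : I x -> I (- x).
Proof. by move=> Ix; rewrite -sub0r; exact: (idealB idI (ideal0 idI) Ix). Qed.

Lemma idealD x y : I x -> I y -> I (x + y).
Proof. by move=> Ix Iy; rewrite -[y]opprK; apply: idealB => //; exact: idealN. Qed.

Lemma ideal_sum (T : eqType) (s : seq T) (F : T -> R) :
  (forall t, t \in s -> I (F t)) -> I (\sum_(t <- s) F t).
Proof.
by move=> sI; rewrite big_seq; apply: big_ind => //; [exact: ideal0|exact: idealD].
Qed.

Definition ideal_adjoin (e : R) : set R :=
  [set t | exists2 u, I u & exists c, t = u + e * c].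

Lemma ideal_adjoin_ideal e : ideal (ideal_adjoin e).
Proof.
split.
- by exists 0; [exact: ideal0|exists 0; rewrite mulr0 addr0].
- move=> _ _ [u Iu [c ->]] [v Iv [d ->]].
  by exists (u - v); [exact: idealB|exists (c - d); ring].
- move=> a _ [u Iu [c ->]].
  by exists (a * u); [exact: idealMl|exists (a * c); ring].
Qed.

Lemma sub_ideal_adjoin e : I `<=` ideal_adjoin e.
Proof. by move=> u Iu; exists u => //; exists 0; rewrite mulr0 addr0. Qed.

Lemma ideal_adjoin_gen e : ideal_adjoin e e.
Proof. by exists 0; [exact: ideal0|exists 1; rewrite mulr1 add0r]. Qed.

End IdealTheory.

Lemma ideal_bigcup_chain (R : comPzRingType) (F : set (set R)) :
  (forall I, F I -> ideal I) -> total_on F subset -> F !=set0 ->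
  ideal (\bigcup_(X in F) X).
Proof.
move=> Fid Ftot [I0 FI0]; split.
- by exists I0 => //; exact: (ideal0 (Fid _ FI0)).
- move=> x y Fx Fy; have [I FI Ixy] : exists2 I, F I & forall t, t \in [:: x; y] -> I t.
    by apply: chain_bigcup_seq => //; [exists I0|move=> t /[!inE] /orP [] /eqP ->].
  by exists I => //; apply: (idealB (Fid _ FI)); apply: Ixy; rewrite !inE eqxx ?orbT.
- by move=> a x [I FI Ix]; exists I => //; exact: (idealMl (Fid _ FI)).
Qed.

Section Extension.
Variables (A Z : comPzRingType) (k : {rmorphism A -> Z}).

Definition extension (m : set A) : set Z :=
  [set z | exists2 s : seq (A * Z), (forall p, p \in s -> m p.1)
                                  & z = \sum_(p <- s) k p.1 * p.2].

Lemma ideal_extension m : ideal (extension m).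
Proof.
split.
- by exists [::]; rewrite ?big_nil.
- move=> _ _ [s sm ->] [t tm ->].
  exists (s ++ [seq (p.1, - p.2) | p <- t]).
    by move=> p; rewrite mem_cat => /orP [/sm //|/mapP [q /tm qm ->]].
  by rewrite big_cat big_map -sumrN; congr (_ + _); apply: eq_bigr => q _; rewrite mulrN.
- move=> a _ [s sm ->]; exists [seq (p.1, a * p.2) | p <- s].
    by move=> p /mapP [q /sm qm ->].
  by rewrite big_map mulr_sumr; apply: eq_bigr => q _; rewrite mulrCA.
Qed.

Lemma extension_gen m a z : m a -> extension m (k a * z).
Proof. by move=> ma; exists [:: (a, z)]; rewrite ?big_seq1 // => p /[!inE] /eqP ->. Qed.

(* Multiplying by [k (1 - e)] kills the new generators [k (e * c)]. *)
Lemma extension_adjoin_idem (m : set A) e x : e * e = e -> ideal m ->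
  extension (ideal_adjoin m e) x -> extension m (x * k (1 - e)).
Proof.
move=> ee idm [s sm ->]; rewrite mulr_suml.
apply: (ideal_sum (ideal_extension m)) => p /sm [u mu [c ->]].
have ek0 : k e * k (1 - e) = 0 by rewrite -rmorphM mulrBr mulr1 ee subrr rmorph0.
have -> : k (u + e * c) * p.2 * k (1 - e) =
          k u * (p.2 * k (1 - e)) + k c * p.2 * (k e * k (1 - e)).
  by rewrite rmorphD rmorphM; ring.
by rewrite ek0 mulr0 addr0; exact: extension_gen.
Qed.

End Extension.

Definition residue_field (A : comPzRingType) (m : set A) :=
  forall a, ~ m a -> exists b, m (1 - a * b).

Section Regular.
Variable A : comPzRingType.
Hypothesis regA : vn_regular A.

Lemma vn_regular_idem (a : A) : exists e c, [/\ e * e = e, a * e = a & e = a * c].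
Proof.
have [b ab] := regA a; exists (a * b), b; split=> //.
  by rewrite mulrACA -expr2 mulrA -ab.
by rewrite mulrA -expr2 -ab.
Qed.

Lemma vn_regular_avoiding_field (X : comPzRingType) (k : {rmorphism A -> X}) x :
  x != 0 -> exists m, [/\ ideal m, ~ extension k m x & residue_field m].
Proof.
move=> x0; pose P := [set J : set A | ideal J /\ ~ extension k J x].
have [|F FP Ftot Fne|M [[idM Mx] _ Mmax]] := @Zorn_above _ P [set 0].
- split; first by split=> [|x1 y1 -> ->|a x1 ->]; rewrite ?subr0 ?mulr0.
  move=> [s s0 xs]; move/eqP: x0; apply; rewrite xs big1_seq // => p /= /s0 ->.
  by rewrite rmorph0 mul0r.
- split; first by apply: ideal_bigcup_chain => // J /FP [].
  move=> [s sF xs]; have [J FJ Js] : exists2 J, F J & forall a, a \in map fst s -> J a.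
    by apply: chain_bigcup_seq => // _ /mapP [p /sF Fp ->].
  by apply: (FP _ FJ).2; exists s => // p ps; apply: Js; exact: map_f.
have adjoin_x f : f * f = f -> ~ M f -> extension k (ideal_adjoin M f) x.
  move=> ff Mf; apply: contrapT => nx; apply: Mf.
  apply: (Mmax _ (conj (ideal_adjoin_ideal idM f) nx)); last exact: ideal_adjoin_gen.
  exact: sub_ideal_adjoin.
exists M; split=> // a Ma; have [e [c [ee ae ec]]] := vn_regular_idem a.
have Me : ~ M e by move=> Me; apply: Ma; rewrite -ae; exact: (idealMl idM).
have [M1e|M1e] := pselect (M (1 - e)); first by exists c; rewrite -ec.
have ee' : (1 - e) * (1 - e) = 1 - e by rewrite mulrBr mulr1 mulrBl mul1r ee subrr subr0.
have := idealD (ideal_extension k M) (extension_adjoin_idem ee idM (adjoin_x _ ee Me))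
  (extension_adjoin_idem ee' idM (adjoin_x _ ee' M1e)).
by rewrite -mulrDr -rmorphD addrC subrK rmorph1 mulr1.
Qed.

Lemma vn_regular_common_idem (m : set A) (s : seq A) : ideal m ->
  (forall a, a \in s -> m a) -> exists2 e, m e & forall a, a \in s -> a * e = a.
Proof.
move=> idm; elim: s => [|a s IH] sm; first by exists 0; [exact: (ideal0 idm)|].
have [e me se] := IH (fun b bs => sm b (mem_behead (s := a :: s) bs)).
have [f [c [ff af fc]]] := vn_regular_idem a.
have mf : m f by rewrite fc mulrC; apply: (idealMl idm); apply: sm; exact: mem_head.
exists (e + f - e * f); first by apply: (idealB idm) (idealD idm me mf) (idealMl idm _ mf).
move=> b; rewrite inE => /predU1P [{b}->|/se be].
  by rewrite mulrBr mulrDr af mulrA [a * e]mulrC -mulrA af; ring.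
by rewrite mulrBr mulrDr mulrA be; ring.
Qed.

Lemma vn_regular_extension_contract (Y : comPzRingType) (k : {rmorphism A -> Y})
    (m : set A) a :
  injective k -> ideal m -> extension k m (k a) -> m a.
Proof.
move=> kinj idm [s sm ka].
have [e me se] : exists2 e, m e & forall b, b \in map fst s -> b * e = b.
  by apply: vn_regular_common_idem => // _ /mapP [p /sm mp ->].
suff -> : a = a * e by exact: (idealMl idm).
apply: kinj; rewrite rmorphM ka mulr_suml; apply: eq_big_seq => p ps.
by rewrite mulrAC -rmorphM se // map_f.
Qed.

End Regular.

Section ResidueFunctional.
Variables (A Y : comPzRingType) (k : {rmorphism A -> Y}) (m : set A).
Hypotheses (idm : ideal m) (fieldm : residue_field m) (m1 : ~ extension k m 1).

(* Graphs of partial [A]-linear maps [Y -> A/m], represented by relations on [Y * A]. *)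
Record lingraph (G : set (Y * A)) : Prop := LinGraph {
  lingraphD : forall p q, G p -> G q -> G (p.1 + q.1, p.2 + q.2);
  lingraphZ : forall a p, G p -> G (k a * p.1, a * p.2);
  lingraph_fun : forall b, G (0, b) -> m b }.

Lemma lingraphB G p q : lingraph G -> G p -> G q -> G (p.1 - q.1, p.2 - q.2).
Proof.
move=> lG Gp Gq; have := lingraphZ lG (-1) Gq; rewrite rmorphN1 !mulN1r => Gq'.
exact: (lingraphD lG Gp Gq').
Qed.

Definition base_graph : set (Y * A) :=
  [set p | exists a, exists2 z, extension k m z & exists2 w, m w & p = (k a + z, a + w)].

Lemma base_graph_extension z : extension k m z -> base_graph (z, 0).
Proof.
by move=> mz; exists 0; exists z => //; exists 0; [exact: (ideal0 idm)|rewrite rmorph0 !add0r].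
Qed.

Lemma base_graph_scalar a : base_graph (k a, a).
Proof.
exists a; exists 0; first exact: (ideal0 (ideal_extension k m)).
by exists 0; [exact: (ideal0 idm)|rewrite !addr0].
Qed.

Lemma lingraph_base : lingraph base_graph.
Proof.
have idX := ideal_extension k m.
split.
- move=> _ _ [a [z mz [w mw ->]]] [a' [z' mz' [w' mw' ->]]].
  exists (a + a'); exists (z + z'); first exact: (idealD idX mz mz').
  by exists (w + w'); [exact: (idealD idm)|rewrite /= rmorphD; congr pair; ring].
- move=> b _ [a [z mz [w mw ->]]]; exists (b * a); exists (k b * z).
    exact: (idealMl idX _ mz).
  by exists (b * w); [exact: (idealMl idm)|rewrite /= rmorphM; congr pair; ring].
- move=> _ [a [z mz [w mw [ka ->]]]]; apply: (idealD idm) => //.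
  have z_ka : z = - k a by apply/eqP; rewrite -addr_eq0 addrC -ka.
  apply: contrapT => ma; apply: m1; have [b mab] := fieldm ma.
  have := idealD idX (extension_gen k 1 mab) (idealMl idX (k b) (idealN idX mz)).
  by rewrite z_ka opprK rmorphB rmorph1 rmorphM mulr1 mulrC subrK.
Qed.

Lemma lingraph_bigcup_chain (F : set (set (Y * A))) :
  (forall G, F G -> lingraph G) -> total_on F subset -> F !=set0 ->
  lingraph (\bigcup_(G in F) G).
Proof.
move=> Fl Ftot Fne; have two p q : (\bigcup_(G in F) G) p -> (\bigcup_(G in F) G) q ->
    exists2 G, F G & G p /\ G q.
  move=> Fp Fq; have [G FG Gpq] : exists2 G, F G & forall t, t \in [:: p; q] -> G t.
    by apply: chain_bigcup_seq => // t /[!inE] /orP [] /eqP ->.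
  by exists G => //; split; apply: Gpq; rewrite !inE eqxx ?orbT.
split.
- move=> p q Fp Fq; have [G FG [Gp Gq]] := two p q Fp Fq.
  by exists G => //; exact: (lingraphD (Fl _ FG)).
- by move=> a p [G FG Gp]; exists G => //; exact: (lingraphZ (Fl _ FG)).
- by move=> b [G FG Gb]; exact: (lingraph_fun (Fl _ FG) Gb).
Qed.

(* A missing [y] could be adjoined with value [0], because [A/m] is a field. *)
Lemma maximal_lingraph_total (M : set (Y * A)) :
  lingraph M -> base_graph `<=` M ->
  (forall G, lingraph G -> M `<=` G -> G `<=` M) -> forall y, exists b, M (y, b).
Proof.
move=> lM baseM Mmax y; apply: contrapT => ny.
have Mker a : m a -> M (k a * y, 0) by move=> ma; apply/baseM/base_graph_extension/extension_gen.
pose G := [set p | exists u a, M (u, p.2) /\ p.1 = u + k a * y].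
have lG : lingraph G.
  split.
  - move=> p q [u [a [Mu ->]]] [u' [a' [Mu' ->]]]; exists (u + u'), (a + a').
    by split; [exact: (lingraphD lM Mu Mu')|rewrite /= rmorphD; ring].
  - move=> b p [u [a [Mu ->]]]; exists (k b * u), (b * a).
    by split; [exact: (lingraphZ lM b Mu)|rewrite /= rmorphM; ring].
  - move=> b [u [a [Mu /esym/eqP]]]; rewrite addr_eq0 => /eqP u_ay.
    have [ma|ma] := pselect (m a).
      apply: (lingraph_fun lM); have := lingraphD lM Mu (Mker a ma).
      by rewrite /= u_ay addNr addr0.
    have [a' maa'] := fieldm ma; exfalso; apply: ny; exists (- (a' * b)).
    have := lingraphB lM (Mker _ maa') (lingraphZ lM a' Mu).
    by rewrite /= u_ay rmorphB rmorph1 rmorphM sub0r; congr M; congr pair; ring.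
apply: ny; exists 0; apply: (Mmax G lG).
  by move=> [u b] Mu; exists u, 0; rewrite rmorph0 mul0r addr0.
exists 0, 1; split; last by rewrite rmorph1 mul1r add0r.
by apply/baseM/base_graph_extension; exact: (ideal0 (ideal_extension k m)).
Qed.

Lemma exists_residue_functional : exists phi : Y -> A,
  [/\ forall y z, m (phi (y + z) - phi y - phi z),
      forall a y, m (phi (k a * y) - a * phi y) & m (phi 1 - 1)].
Proof.
have [M [lM baseM Mmax]] := Zorn_above lingraph_base lingraph_bigcup_chain.
have /choice [phi Mphi] := maximal_lingraph_total lM baseM Mmax.
exists phi; split.
- move=> y z; apply: (lingraph_fun lM).
  have := lingraphB lM (lingraphB lM (Mphi (y + z)) (Mphi y)) (Mphi z).
  by rewrite /= addrAC addrK subrr.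
- move=> a y; apply: (lingraph_fun lM).
  by have := lingraphB lM (Mphi (k a * y)) (lingraphZ lM a (Mphi y)); rewrite /= subrr.
- apply: (lingraph_fun lM).
  have M11 : M (1, 1) by rewrite -{1}(rmorph1 k); exact/baseM/base_graph_scalar.
  by have := lingraphB lM (Mphi 1) M11; rewrite /= subrr.
Qed.

End ResidueFunctional.

Section FormalSums.
Variables X Y : comPzRingType.
Implicit Types s t : seq (X * Y).

Definition oppl s := [seq (- p.1, p.2) | p <- s].
Definition oppr s := [seq (p.1, - p.2) | p <- s].
Definition seqmul s t := [seq (p.1 * q.1, p.2 * q.2) | p <- s, q <- t].

Definition pairing (f : Y -> X) s := \sum_(p <- s) p.1 * f p.2.

Lemma pairing_cat f s t : pairing f (s ++ t) = pairing f s + pairing f t.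
Proof. exact: big_cat. Qed.

Lemma pairing_oppl f s : pairing f (oppl s) = - pairing f s.
Proof. by rewrite /pairing big_map -sumrN; apply: eq_bigr => p _; rewrite mulNr. Qed.

Lemma pairing_seqmul f s t :
  pairing f (seqmul s t) = \sum_(p <- s) \sum_(q <- t) p.1 * q.1 * f (p.2 * q.2).
Proof. exact: big_allpairs_dep. Qed.

Lemma pairing_seqmul_shift f s t :
  pairing f (seqmul s t) = \sum_(q <- t) q.1 * pairing (fun y => f (q.2 * y)) s.
Proof.
rewrite pairing_seqmul exchange_big; apply: eq_bigr => q _.
by rewrite mulr_sumr; apply: eq_bigr => p _; rewrite [p.2 * _]mulrC; ring.
Qed.

Lemma pairing_seqmulC f s t : pairing f (seqmul s t) = pairing f (seqmul t s).
Proof.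
rewrite !pairing_seqmul exchange_big; apply: eq_bigr => q _; apply: eq_bigr => p _.
by rewrite [p.1 * _]mulrC [p.2 * _]mulrC.
Qed.

Lemma pairing_seqmulA f s t u :
  pairing f (seqmul (seqmul s t) u) = pairing f (seqmul s (seqmul t u)).
Proof.
rewrite !pairing_seqmul big_allpairs_dep; apply: eq_bigr => p _.
rewrite big_allpairs_dep; apply: eq_bigr => q _; apply: eq_bigr => r _.
by rewrite /= !mulrA.
Qed.

Lemma pairing_seqmul1 f s : pairing f (seqmul [:: (1, 1)] s) = pairing f s.
Proof.
by rewrite pairing_seqmul big_seq1; apply: eq_bigr => p _; rewrite !mul1r.
Qed.

End FormalSums.

Definition swap (X Y : Type) (s : seq (X * Y)) : seq (Y * X) := [seq (p.2, p.1) | p <- s].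

Lemma swap_cat (X Y : Type) (s t : seq (X * Y)) : swap (s ++ t) = swap s ++ swap t.
Proof. exact: map_cat. Qed.

Lemma swapK (X Y : Type) : cancel (@swap X Y) (@swap Y X).
Proof. by elim=> //= -[x y] s ->. Qed.

Lemma swap_oppl (X Y : comPzRingType) (s : seq (X * Y)) : swap (oppl s) = oppr (swap s).
Proof. by rewrite /swap /oppl /oppr -!map_comp. Qed.

Lemma swap_oppr (X Y : comPzRingType) (s : seq (X * Y)) : swap (oppr s) = oppl (swap s).
Proof. by rewrite /swap /oppl /oppr -!map_comp. Qed.

Lemma swap_seqmul (X Y : comPzRingType) (s t : seq (X * Y)) :
  swap (seqmul s t) = seqmul (swap s) (swap t).
Proof.
elim: s => [|p s IH] //; rewrite /seqmul allpairs_cons swap_cat -/(seqmul s t) IH /=.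
by congr (_ ++ _); rewrite /swap -!map_comp.
Qed.

Section Separation.
Variables (A X Y : comPzRingType) (k1 : {rmorphism A -> X}) (k2 : {rmorphism A -> Y}).
Implicit Types s t : seq (X * Y).

(* [f] induces an [A]-linear map [Y -> X/N]. *)
Record linear_mod (N : set X) (f : Y -> X) : Prop := LinearMod {
  linear_mod_ideal : ideal N;
  linear_modD : forall y z, N (f (y + z) - f y - f z);
  linear_modZ : forall a y, N (f (k2 a * y) - k1 a * f y) }.

Lemma linear_mod0 N f : linear_mod N f -> N (f 0).
Proof.
by case=> idN fD _; have := idealN idN (fD 0 0); rewrite addr0 subrr sub0r opprK.
Qed.

Lemma linear_modN N f y : linear_mod N f -> N (f (- y) + f y).
Proof.
move=> fN; have := idealB (linear_mod_ideal fN) (linear_mod0 fN) (linear_modD fN y (- y)).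
by rewrite (subrr y) (_ : f (- y) + f y = f 0 - (f 0 - f y - f (- y))) //; ring.
Qed.

Lemma linear_mod_shift N f c : linear_mod N f -> linear_mod N (fun y => f (c * y)).
Proof.
by case=> idN fD fZ; split=> // [y z|a y]; [rewrite mulrDr|rewrite mulrCA].
Qed.

Definition unseparated s t :=
  forall N f, linear_mod N f -> N (pairing f s - pairing f t).

Lemma unseparated_eq s t : (forall f, pairing f s = pairing f t) -> unseparated s t.
Proof. by move=> st N f [idN _ _]; rewrite st subrr; exact: (ideal0 idN). Qed.

Lemma unseparated_refl s : unseparated s s.
Proof. exact: unseparated_eq. Qed.

Lemma unseparated_sym s t : unseparated s t -> unseparated t s.
Proof.
by move=> st N f fN; rewrite -opprB; exact: (idealN (linear_mod_ideal fN) (st N f fN)).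
Qed.

Lemma unseparated_trans s t u : unseparated s t -> unseparated t u -> unseparated s u.
Proof.
move=> st tu N f fN; have := idealD (linear_mod_ideal fN) (st N f fN) (tu N f fN).
by rewrite addrA subrK.
Qed.

Lemma unseparated_cat s s' t t' :
  unseparated s s' -> unseparated t t' -> unseparated (s ++ t) (s' ++ t').
Proof.
move=> ss tt N f fN; rewrite !pairing_cat opprD addrACA.
exact: (idealD (linear_mod_ideal fN) (ss N f fN) (tt N f fN)).
Qed.

Lemma unseparated_oppl s t : unseparated s t -> unseparated (oppl s) (oppl t).
Proof.
move=> st N f fN; rewrite !pairing_oppl -opprD.
exact: (idealN (linear_mod_ideal fN) (st N f fN)).
Qed.

Lemma unseparated_oppr_oppl s : unseparated (oppr s) (oppl s).
Proof.
move=> N f fN; have idN := linear_mod_ideal fN.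
rewrite pairing_oppl opprK /pairing big_map -big_split /=.
by apply: (ideal_sum idN) => p _; rewrite -mulrDr; exact: (idealMl idN _ (linear_modN _ fN)).
Qed.

Lemma unseparated_addNl s : unseparated (oppl s ++ s) [::].
Proof.
by apply: unseparated_eq => f; rewrite pairing_cat pairing_oppl addNr /pairing big_nil.
Qed.

Lemma unseparated_oppr s t : unseparated s t -> unseparated (oppr s) (oppr t).
Proof.
move=> st; apply: (unseparated_trans (unseparated_oppr_oppl s)).
exact: (unseparated_trans (unseparated_oppl st) (unseparated_sym (unseparated_oppr_oppl t))).
Qed.

Lemma unseparated_seqmull s s' t :
  unseparated s s' -> unseparated (seqmul s t) (seqmul s' t).
Proof.
move=> ss N f fN; have idN := linear_mod_ideal fN.
rewrite !pairing_seqmul_shift -sumrB; apply: (ideal_sum idN) => q _.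
by rewrite -mulrBr; apply: (idealMl idN); exact: (ss N _ (linear_mod_shift _ fN)).
Qed.

Lemma unseparated_seqmul s s' t t' :
  unseparated s s' -> unseparated t t' -> unseparated (seqmul s t) (seqmul s' t').
Proof.
move=> ss tt; apply: (unseparated_trans (unseparated_seqmull t ss)).
have C u v : unseparated (seqmul u v) (seqmul v u).
  by apply: unseparated_eq => f; exact: pairing_seqmulC.
exact: (unseparated_trans (C _ _) (unseparated_trans (unseparated_seqmull s' tt) (C _ _))).
Qed.

Lemma unseparated_scalar a : unseparated [:: (k1 a, 1)] [:: (1, k2 a)].
Proof.
move=> N f fN; rewrite /pairing !big_seq1 /= mul1r -opprB -[f (k2 a)]mulr1.
by apply: (idealN (linear_mod_ideal fN)); rewrite mulr1 -[k2 a]mulr1; exact: (linear_modZ fN).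
Qed.

Lemma unseparated_addr y z : unseparated [:: (1, y + z)] [:: (1, y); (1, z)].
Proof.
move=> N f fN; rewrite /pairing !big_cons !big_nil /= !mul1r !addr0 opprD addrA.
exact: (linear_modD fN).
Qed.

End Separation.

Lemma vn_regular_separating (A X Y : comPzRingType)
    (k1 : {rmorphism A -> X}) (k2 : {rmorphism A -> Y}) (x : X) :
  vn_regular A -> injective k2 -> x != 0 ->
  exists N f, linear_mod k1 k2 N f /\ ~ N (x * f 1).
Proof.
move=> regA k2inj x0; have idX m := ideal_extension k1 m.
have [m [idm mx fieldm]] := vn_regular_avoiding_field regA k1 x0.
have m1 : ~ extension k2 m 1.
  rewrite -(rmorph1 k2) => /(vn_regular_extension_contract regA k2inj idm) m1.
  by apply: mx; rewrite -[x]mul1r -(rmorph1 k1); exact: extension_gen.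
have [phi [phiD phiZ phi1]] := exists_residue_functional idm fieldm m1.
have k1_ext a : m a -> extension k1 m (k1 a) by rewrite -[k1 a]mulr1; exact: extension_gen.
exists (extension k1 m), (k1 \o phi); split.
  by split=> // [y z|a y]; rewrite /= -?rmorphM -!rmorphB; exact: k1_ext.
move=> Nx1; apply: mx; have := idealB (idX m) Nx1 (idealMl (idX m) x (k1_ext _ phi1)).
by rewrite /= rmorphB rmorph1 mulrBr subKr mulr1.
Qed.

Lemma vn_regular_unseparated_eq (A X Y : comPzRingType)
    (k1 : {rmorphism A -> X}) (k2 : {rmorphism A -> Y}) (x y : X) :
  vn_regular A -> injective k2 -> unseparated k1 k2 [:: (x, 1)] [:: (y, 1)] -> x = y.
Proof.
move=> regA k2inj xy; apply/eqP; rewrite -subr_eq0; apply/negPn/negP.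
move=> /(vn_regular_separating k1 regA k2inj) [N [f [fN]]]; apply.
by have := xy N f fN; rewrite /pairing !big_seq1 mulrBl.
Qed.

Section TensorEquiv.
Variables (A B C : comPzRingType) (h1 : {rmorphism A -> B}) (h2 : {rmorphism A -> C}).
Implicit Types s t : seq (B * C).

Definition tensor_equiv s t :=
  unseparated h1 h2 s t /\ unseparated h2 h1 (swap s) (swap t).

Lemma tensor_equiv_eq s t : (forall f, pairing f s = pairing f t) ->
  (forall g, pairing g (swap s) = pairing g (swap t)) -> tensor_equiv s t.
Proof. by move=> st st'; split; apply: unseparated_eq. Qed.

Lemma tensor_equiv_refl s : tensor_equiv s s.
Proof. by split; apply: unseparated_refl. Qed.

Lemma tensor_equiv_sym s t : tensor_equiv s t -> tensor_equiv t s.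
Proof. by case=> st st'; split; apply: unseparated_sym. Qed.

Lemma tensor_equiv_trans s t u :
  tensor_equiv s t -> tensor_equiv t u -> tensor_equiv s u.
Proof.
by case=> st st' [tu tu']; split; [exact: (unseparated_trans st)|exact: (unseparated_trans st')].
Qed.

Lemma tensor_equiv_cat s s' t t' :
  tensor_equiv s s' -> tensor_equiv t t' -> tensor_equiv (s ++ t) (s' ++ t').
Proof. by case=> ss ss' [tt tt']; split; rewrite ?swap_cat; exact: unseparated_cat. Qed.

Lemma tensor_equiv_oppl s t : tensor_equiv s t -> tensor_equiv (oppl s) (oppl t).
Proof.
by case=> st st'; split; rewrite ?swap_oppl; [exact: unseparated_oppl|exact: unseparated_oppr].
Qed.

Lemma tensor_equiv_oppr_oppl s : tensor_equiv (oppr s) (oppl s).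
Proof.
split; first exact: unseparated_oppr_oppl.
by rewrite swap_oppl swap_oppr; exact: (unseparated_sym (unseparated_oppr_oppl _)).
Qed.

Lemma tensor_equiv_seqmul s s' t t' :
  tensor_equiv s s' -> tensor_equiv t t' -> tensor_equiv (seqmul s t) (seqmul s' t').
Proof. by case=> ss ss' [tt tt']; split; rewrite ?swap_seqmul; exact: unseparated_seqmul. Qed.

Lemma tensor_equiv_subl x y : tensor_equiv [:: (x - y, 1)] [:: (x, 1); (- y, 1)].
Proof.
split; last exact: unseparated_addr.
by apply: unseparated_eq => f; rewrite /pairing !big_cons !big_nil !addr0 mulrBl mulNr.
Qed.

End TensorEquiv.

Lemma tensor_equiv_swap (A B C : comPzRingType) (h1 : {rmorphism A -> B})
    (h2 : {rmorphism A -> C}) s t :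
  tensor_equiv h1 h2 s t -> tensor_equiv h2 h1 (swap s) (swap t).
Proof. by case=> st st'; split; rewrite ?swapK. Qed.

Lemma tensor_equiv_subr (A B C : comPzRingType) (h1 : {rmorphism A -> B})
    (h2 : {rmorphism A -> C}) x y :
  tensor_equiv h1 h2 [:: (1, x - y)] [:: (1, x); (-1, y)].
Proof.
apply: tensor_equiv_trans (tensor_equiv_swap (tensor_equiv_subl h2 h1 x y)) _.
exact (tensor_equiv_cat (tensor_equiv_refl h1 h2 [:: (1, x)])
  (tensor_equiv_oppr_oppl h1 h2 [:: (1, y)])).
Qed.

Section Tensor.
Variables (A B C : comPzRingType) (h1 : {rmorphism A -> B}) (h2 : {rmorphism A -> C}).
Local Open Scope quotient_scope.

Definition tensor_rel (s t : seq (B * C)) := `[< tensor_equiv h1 h2 s t >].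

Lemma tensor_rel_is_equiv : equiv_class_of tensor_rel.
Proof.
split=> [s|s t|t s u]; rewrite /tensor_rel.
- exact/asboolP/tensor_equiv_refl.
- by apply/asboolP/asboolP => /tensor_equiv_sym.
- by move=> /asboolP st /asboolP tu; apply/asboolP; exact: tensor_equiv_trans tu.
Qed.

Canonical tensor_rel_equiv := EquivRelPack tensor_rel_is_equiv.
Canonical tensor_rel_encModRel := defaultEncModRel tensor_rel.

Definition tensor := {eq_quot tensor_rel}.
HB.instance Definition _ : EqQuotient (seq (B * C)) tensor_rel tensor :=
  EqQuotient.on tensor.
HB.instance Definition _ := Choice.on tensor.

Lemma pi_tensor_eq s t : \pi_tensor s = \pi_tensor t <-> tensor_equiv h1 h2 s t.
Proof.
split=> [/eqP|st]; first by rewrite piE => /asboolP.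
by apply/eqP; rewrite piE; exact/asboolP.
Qed.

Lemma tensor_equiv_repr s : tensor_equiv h1 h2 s (repr (\pi_tensor s)).
Proof. by apply/pi_tensor_eq; rewrite reprK. Qed.

Definition tensor_zero : tensor := lift_cst tensor [::].
Definition tensor_one : tensor := lift_cst tensor [:: (1, 1)].
Definition tensor_add := lift_op2 tensor cat.
Definition tensor_opp := lift_op1 tensor (@oppl B C).
Definition tensor_mul := lift_op2 tensor (@seqmul B C).

Canonical pi_tensor_zero := PiConst tensor_zero.
Canonical pi_tensor_one := PiConst tensor_one.

Lemma pi_tensor_add : {morph \pi_tensor : s t / s ++ t >-> tensor_add s t}.
Proof.
move=> s t /=; unlock tensor_add; apply/pi_tensor_eq.
by apply: tensor_equiv_cat; exact: tensor_equiv_repr.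
Qed.
Canonical pi_tensor_add_morph := PiMorph2 pi_tensor_add.

Lemma pi_tensor_opp : {morph \pi_tensor : s / oppl s >-> tensor_opp s}.
Proof.
by move=> s /=; unlock tensor_opp; apply/pi_tensor_eq/tensor_equiv_oppl/tensor_equiv_repr.
Qed.
Canonical pi_tensor_opp_morph := PiMorph1 pi_tensor_opp.

Lemma pi_tensor_mul : {morph \pi_tensor : s t / seqmul s t >-> tensor_mul s t}.
Proof.
move=> s t /=; unlock tensor_mul; apply/pi_tensor_eq.
by apply: tensor_equiv_seqmul; exact: tensor_equiv_repr.
Qed.
Canonical pi_tensor_mul_morph := PiMorph2 pi_tensor_mul.

Lemma tensor_addA : associative tensor_add.
Proof. by move=> x y z; rewrite -[x]reprK -[y]reprK -[z]reprK !piE catA. Qed.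

Lemma tensor_addC : commutative tensor_add.
Proof.
move=> x y; rewrite -[x]reprK -[y]reprK !piE; apply/pi_tensor_eq.
by apply: tensor_equiv_eq => f; rewrite ?swap_cat !pairing_cat addrC.
Qed.

Lemma tensor_add0 : left_id tensor_zero tensor_add.
Proof. by move=> x; rewrite -[x]reprK !piE. Qed.

Lemma tensor_addN : left_inverse tensor_zero tensor_opp tensor_add.
Proof.
move=> x; rewrite -[x]reprK !piE; apply/pi_tensor_eq.
split; first exact: unseparated_addNl.
rewrite swap_cat swap_oppl.
apply: (unseparated_trans (unseparated_cat (unseparated_oppr_oppl _) (unseparated_refl _))).
exact: unseparated_addNl.
Qed.

HB.instance Definition _ :=
  GRing.isZmodule.Build tensor tensor_addA tensor_addC tensor_add0 tensor_addN.

Lemma tensor_mulA : associative tensor_mul.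
Proof.
move=> x y z; rewrite -[x]reprK -[y]reprK -[z]reprK !piE; apply/pi_tensor_eq.
by apply: tensor_equiv_eq => f; rewrite ?swap_seqmul pairing_seqmulA.
Qed.

Lemma tensor_mulC : commutative tensor_mul.
Proof.
move=> x y; rewrite -[x]reprK -[y]reprK !piE; apply/pi_tensor_eq.
by apply: tensor_equiv_eq => f; rewrite ?swap_seqmul pairing_seqmulC.
Qed.

Lemma tensor_mul1 : left_id tensor_one tensor_mul.
Proof.
move=> x; rewrite -[x]reprK !piE; apply/pi_tensor_eq.
by apply: tensor_equiv_eq => f; rewrite ?swap_seqmul pairing_seqmul1.
Qed.

Lemma tensor_mulDl : left_distributive tensor_mul tensor_add.
Proof.
by move=> x y z; rewrite -[x]reprK -[y]reprK -[z]reprK !piE /seqmul allpairs_cat.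
Qed.

HB.instance Definition _ :=
  GRing.Zmodule_isComPzRing.Build tensor tensor_mulA tensor_mulC tensor_mul1 tensor_mulDl.

End Tensor.

Section TensorMaps.
Variables (A B C : comPzRingType) (h1 : {rmorphism A -> B}) (h2 : {rmorphism A -> C}).
Local Open Scope quotient_scope.
Local Notation T := (tensor h1 h2).

Lemma pi_tensorD s t : \pi_T s + \pi_T t = \pi_T (s ++ t).
Proof. by rewrite pi_tensor_add. Qed.

Lemma pi_tensorN s : - \pi_T s = \pi_T (oppl s).
Proof. by rewrite pi_tensor_opp. Qed.

Lemma pi_tensorM s t : \pi_T s * \pi_T t = \pi_T (seqmul s t).
Proof. by rewrite pi_tensor_mul. Qed.

Lemma pi_tensor1 : 1 = \pi_T [:: (1, 1)].
Proof. by rewrite /GRing.one /= /tensor_one; unlock. Qed.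

Definition tensorl (b : B) : T := \pi_T [:: (b, 1)].
Definition tensorr (c : C) : T := \pi_T [:: (1, c)].

Lemma tensorl_is_zmod_morphism : zmod_morphism tensorl.
Proof.
by move=> x y; rewrite /tensorl pi_tensorN pi_tensorD; apply/pi_tensor_eq/tensor_equiv_subl.
Qed.

Lemma tensorl_is_monoid_morphism : monoid_morphism tensorl.
Proof. by split=> [|x y]; rewrite /tensorl ?pi_tensor1 // pi_tensorM /seqmul /= mulr1. Qed.

HB.instance Definition _ := GRing.isZmodMorphism.Build B T tensorl tensorl_is_zmod_morphism.
HB.instance Definition _ := GRing.isMonoidMorphism.Build B T tensorl tensorl_is_monoid_morphism.

Lemma tensorr_is_zmod_morphism : zmod_morphism tensorr.
Proof.
by move=> x y; rewrite /tensorr pi_tensorN pi_tensorD; apply/pi_tensor_eq/tensor_equiv_subr.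
Qed.

Lemma tensorr_is_monoid_morphism : monoid_morphism tensorr.
Proof. by split=> [|x y]; rewrite /tensorr ?pi_tensor1 // pi_tensorM /seqmul /= mulr1. Qed.

HB.instance Definition _ := GRing.isZmodMorphism.Build C T tensorr tensorr_is_zmod_morphism.
HB.instance Definition _ := GRing.isMonoidMorphism.Build C T tensorr tensorr_is_monoid_morphism.

Lemma tensorl_tensorr a : tensorl (h1 a) = tensorr (h2 a).
Proof.
apply/pi_tensor_eq; split; first exact: unseparated_scalar.
exact: (unseparated_sym (unseparated_scalar (k1 := h2) (k2 := h1) a)).
Qed.

Lemma tensorl_inj : vn_regular A -> injective h2 -> injective tensorl.
Proof.
by move=> regA h2inj x y /pi_tensor_eq [xy _]; exact: (vn_regular_unseparated_eq regA h2inj xy).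
Qed.

Lemma tensorr_inj : vn_regular A -> injective h1 -> injective tensorr.
Proof.
by move=> regA h1inj x y /pi_tensor_eq [_ xy]; exact: (vn_regular_unseparated_eq regA h1inj xy).
Qed.

End TensorMaps.

Section ReducedQuotient.
Variable R : comPzRingType.
Local Open Scope quotient_scope.

Definition nilpotent (x : R) := exists n, x ^+ n = 0.

Lemma nilpotentD x y : nilpotent x -> nilpotent y -> nilpotent (x + y).
Proof.
move=> [m xm] [n yn]; exists (m + n)%N; rewrite exprDn big1 // => -[i /=].
rewrite ltnS => lei _; have [lt_in|le_ni] := ltnP i n.
  have le_m : (m <= m + n - i)%N by rewrite -addnBA ?leq_addr // ltnW.
  by rewrite -(subnK le_m) exprD xm mulr0 mul0r mul0rn.
by rewrite -(subnK le_ni) exprD yn !mulr0 mul0rn.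
Qed.

Lemma nilpotentN x : nilpotent x -> nilpotent (- x).
Proof. by move=> [n xn]; exists n; rewrite exprNn xn mulr0. Qed.

Lemma nilpotentMl a x : nilpotent x -> nilpotent (a * x).
Proof. by move=> [n xn]; exists n; rewrite exprMn xn mulr0. Qed.

Definition nil_rel x y := `[< nilpotent (x - y) >].

Lemma nil_rel_is_equiv : equiv_class_of nil_rel.
Proof.
split=> [x|x y|y x z]; rewrite /nil_rel.
- by apply/asboolP; exists 1%N; rewrite subrr expr1.
- by apply/asboolP/asboolP => /nilpotentN; rewrite opprB.
- move=> /asboolP xy /asboolP yz; apply/asboolP.
  by rewrite -(subrK y x) -addrA; exact: nilpotentD.
Qed.

Canonical nil_rel_equiv := EquivRelPack nil_rel_is_equiv.
Canonical nil_rel_encModRel := defaultEncModRel nil_rel.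

Definition reduction := {eq_quot nil_rel}.
HB.instance Definition _ : EqQuotient R nil_rel reduction := EqQuotient.on reduction.
HB.instance Definition _ := Choice.on reduction.

Lemma pi_reduction_eq x y : \pi_reduction x = \pi_reduction y <-> nilpotent (x - y).
Proof.
split=> [/eqP|xy]; first by rewrite piE => /asboolP.
by apply/eqP; rewrite piE; exact/asboolP.
Qed.

Lemma nilpotent_repr x : nilpotent (x - repr (\pi_reduction x)).
Proof. by apply/pi_reduction_eq; rewrite reprK. Qed.

Definition reduction_zero : reduction := lift_cst reduction 0.
Definition reduction_one : reduction := lift_cst reduction 1.
Definition reduction_add := lift_op2 reduction +%R.
Definition reduction_opp := lift_op1 reduction -%R.
Definition reduction_mul := lift_op2 reduction *%R.

Canonical pi_reduction_zero := PiConst reduction_zero.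
Canonical pi_reduction_one := PiConst reduction_one.

Lemma pi_reduction_add : {morph \pi_reduction : x y / x + y >-> reduction_add x y}.
Proof.
move=> x y /=; unlock reduction_add; apply/pi_reduction_eq.
by rewrite opprD addrACA; apply: nilpotentD; exact: nilpotent_repr.
Qed.
Canonical pi_reduction_add_morph := PiMorph2 pi_reduction_add.

Lemma pi_reduction_opp : {morph \pi_reduction : x / - x >-> reduction_opp x}.
Proof.
move=> x /=; unlock reduction_opp; apply/pi_reduction_eq.
by rewrite -opprD; apply/nilpotentN/nilpotent_repr.
Qed.
Canonical pi_reduction_opp_morph := PiMorph1 pi_reduction_opp.

Lemma pi_reduction_mul : {morph \pi_reduction : x y / x * y >-> reduction_mul x y}.
Proof.
move=> x y /=; unlock reduction_mul; apply/pi_reduction_eq.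
set x' := repr _; set y' := repr _.
rewrite (_ : x * y - _ = y * (x - x') + x' * (y - y')); last by ring.
by apply: nilpotentD; apply: nilpotentMl; exact: nilpotent_repr.
Qed.
Canonical pi_reduction_mul_morph := PiMorph2 pi_reduction_mul.

Lemma reduction_addA : associative reduction_add.
Proof. by move=> x y z; rewrite -[x]reprK -[y]reprK -[z]reprK !piE addrA. Qed.

Lemma reduction_addC : commutative reduction_add.
Proof. by move=> x y; rewrite -[x]reprK -[y]reprK !piE addrC. Qed.

Lemma reduction_add0 : left_id reduction_zero reduction_add.
Proof. by move=> x; rewrite -[x]reprK !piE add0r. Qed.

Lemma reduction_addN : left_inverse reduction_zero reduction_opp reduction_add.
Proof. by move=> x; rewrite -[x]reprK !piE addNr. Qed.

HB.instance Definition _ := GRing.isZmodule.Build reduction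
  reduction_addA reduction_addC reduction_add0 reduction_addN.

Lemma reduction_mulA : associative reduction_mul.
Proof. by move=> x y z; rewrite -[x]reprK -[y]reprK -[z]reprK !piE mulrA. Qed.

Lemma reduction_mulC : commutative reduction_mul.
Proof. by move=> x y; rewrite -[x]reprK -[y]reprK !piE mulrC. Qed.

Lemma reduction_mul1 : left_id reduction_one reduction_mul.
Proof. by move=> x; rewrite -[x]reprK !piE mul1r. Qed.

Lemma reduction_mulDl : left_distributive reduction_mul reduction_add.
Proof. by move=> x y z; rewrite -[x]reprK -[y]reprK -[z]reprK !piE mulrDl. Qed.

HB.instance Definition _ := GRing.Zmodule_isComPzRing.Build reduction
  reduction_mulA reduction_mulC reduction_mul1 reduction_mulDl.

Definition reduce : R -> reduction := \pi_reduction.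

Lemma reduce_is_zmod_morphism : zmod_morphism reduce.
Proof. by move=> x y; rewrite /reduce pi_reduction_add pi_reduction_opp. Qed.

Lemma reduce_is_monoid_morphism : monoid_morphism reduce.
Proof.
split=> [|x y]; last by rewrite /reduce pi_reduction_mul.
by rewrite /reduce /GRing.one /= /reduction_one; unlock.
Qed.

HB.instance Definition _ := GRing.isZmodMorphism.Build R reduction reduce reduce_is_zmod_morphism.
HB.instance Definition _ :=
  GRing.isMonoidMorphism.Build R reduction reduce reduce_is_monoid_morphism.

Lemma reduce_eq0 x : reduce x = 0 <-> nilpotent x.
Proof. by rewrite -(rmorph0 reduce) pi_reduction_eq subr0. Qed.

Lemma reduction_reduced : reduced reduction.
Proof.
move=> q n; rewrite -[q]reprK -/(reduce _) -rmorphXn => /reduce_eq0 [k].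
by rewrite -exprM => xnk; apply/reduce_eq0; exists (n * k)%N.
Qed.

Lemma reduce_comp_inj (S : comPzRingType) (g : {rmorphism S -> R}) :
  reduced S -> injective g -> injective (reduce \o g).
Proof.
move=> redS ginj x y /= /eqP; rewrite -subr_eq0 -!rmorphB => /eqP /reduce_eq0 [n].
by rewrite -rmorphXn -(rmorph0 g) => /ginj /redS /eqP; rewrite subr_eq0 => /eqP.
Qed.

End ReducedQuotient.

Theorem mainTheorem11 (A : comPzRingType) (hA : vn_regular A)
  (B C : comPzRingType) (hB : reduced B) (hC : reduced C)
  (h1 : {rmorphism A -> B}) (h2 : {rmorphism A -> C})
  (inj1 : injective h1) (inj2 : injective h2) :
  exists (D : comPzRingType) (g1 : {rmorphism B -> D}) (g2 : {rmorphism C -> D}),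
    [/\ reduced D, injective g1, injective g2 & forall a : A, g1 (h1 a) = g2 (h2 a)].
Proof.
exists (reduction (tensor h1 h2)).
exists (@reduce _ \o tensorl h1 h2 : {rmorphism B -> _}).
exists (@reduce _ \o tensorr h1 h2 : {rmorphism C -> _}).
split.
- exact: reduction_reduced.
- exact: (reduce_comp_inj hB (tensorl_inj hA inj2)).
- exact: (reduce_comp_inj hC (tensorr_inj hA inj1)).
- by move=> a /=; rewrite tensorl_tensorr.
Qed.
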